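(* Let $A=(a_{jk})\in\mathbb C^{6\times 6}$ be a hermitian matrix such that $\bar zAz^T\geq 0$ for all $z\in\mathbb C^6$ with $z_1z_6+z_2z_5+z_3z_4=0$. Then $$\sum_{j,k=1}^{6}a_{jk}\,a_{7-j,7-k}\geq 0.$$ *)

From HB Require Import structures.
From mathcomp Require Import all_boot all_order all_algebra.
From mathcomp Require Import reals.
From mathcomp Require Export complex.
Set Implicit Arguments. Unset Strict Implicit. Unset Printing Implicit Defensive.
Import Order.TTheory GRing.Theory Num.Theory.
Local Open Scope ring_scope.
Local Open Scope complex_scope.

(* Indices 'I_6 = {0..5} stand for 1..6,
   so index 7-j corresponds to rev_ord j (value 5 - j). *)

Definition is_hermitian6 (R : rcfType) (A : 'M[R[i]]_6) : Prop :=
  forall j k : 'I_6, A k j = (A j k)^*.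

Definition herm_form (R : rcfType) (A : 'M[R[i]]_6) (z : 'rV[R[i]]_6) : R[i] :=
  \sum_(j < 6) \sum_(k < 6) (z 0 j)^* * A j k * z 0 k.

From mathcomp Require Import all_boot all_order all_algebra.
From mathcomp Require Import reals.
From mathcomp Require Import sesquilinear spectral ring.
Import GRing.Theory Num.Theory.
Local Open Scope ring_scope.
Local Open Scope sesquilinear_scope.

(** Let J be the reversal permutation and B = J conj(A) J.  For hermitian A the
    sum in question is tr(AB), and H = A - B is hermitian.  In an orthonormal
    eigenbasis of H the matrices A and B differ only on the diagonal, so
    tr(AB) = sum_i a_ii b_ii + sum_(i <> j) |a_ij|^2.  If the i-th eigenvalue is
    0 then b_ii = a_ii is real.  Otherwise the eigenvector z is isotropic for
    q(z) = sum_j z_j z_(7-j) = 2 (z_1 z_6 + z_2 z_5 + z_3 z_4), because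
    lambda q(z) = z H (Jz)^T and the bilinear form (u, v) |-> u H (Jv)^T is
    alternating; hence a_ii = conj(z) A z^T >= 0 and likewise b_ii >= 0,
    the isotropic vector now being J z. *)

Section HermitianTrace.
Context {C : numClosedFieldType} {n : nat}.

Lemma mxtrace_unitary_conj (P X Y : 'M[C]_n) : P \is unitarymx ->
  \tr ((P *m X *m P^t*) *m (P *m Y *m P^t*)) = \tr (X *m Y).
Proof.
move=> Pu; rewrite !mulmxA (mulmxKtV (P *m X) Pu) //.
by rewrite -!mulmxA mxtrace_mulC !mulmxA (mulmxKtV (X *m Y) Pu).
Qed.

Lemma mxtrace_mul_ge0 (X Y : 'M[C]_n) (d : 'rV[C]_n) :
    X^t* = X -> X - Y = diag_mx d ->
    (forall i, d 0 i != 0 -> 0 <= X i i * Y i i) ->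
  0 <= \tr (X *m Y).
Proof.
move=> Xherm XYdiag XYii_ge0.
have XYE i j : Y i j = X i j - d 0 i *+ (i == j).
  by have /matrixP/(_ i j) := XYdiag; rewrite !mxE => <-; rewrite opprB addrC subrK.
have Xconj i j : X i j * X j i = X i j * (X i j)^*.
  by rewrite -{2}Xherm !mxE.
apply: sumr_ge0 => i _; rewrite mxE (bigD1 i) //=; apply: addr_ge0.
  have [d0|] := eqVneq (d 0 i) 0; last exact: XYii_ge0.
  by rewrite XYE d0 mul0rn subr0 Xconj mul_conjC_ge0.
apply: sumr_ge0 => j ji.
by rewrite XYE (negbTE ji) mulr0n subr0 Xconj mul_conjC_ge0.
Qed.

Lemma spectral_conj_herm (H : 'M[C]_n) : H^t* = H ->
  spectralmx H *m H *m (spectralmx H)^t* = diag_mx (spectral_diag H).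
Proof.
move=> Hherm; have /orthomx_spectralP {2}-> : H \is normalmx.
  by apply/normalmxP; rewrite Hherm.
have Pu := spectral_unitarymx H.
rewrite invmx_unitary // !mulmxA (mulmxtVK _ Pu).
by have /unitarymxP -> := Pu; rewrite mul1mx.
Qed.

Lemma row_spectral_eigen (H : 'M[C]_n) i : H^t* = H ->
  row i (spectralmx H) *m H = spectral_diag H 0 i *: row i (spectralmx H).
Proof.
move=> Hherm; rewrite -row_mul.
rewrite -(mulmxKtV (spectralmx H *m H) (spectral_unitarymx H)) //.
by rewrite spectral_conj_herm // row_mul row_diag_mx -scalemxAl -rowE.
Qed.

End HermitianTrace.

Section ReversalForm.
Context {C : numClosedFieldType} {n : nat}.

Definition rev_form (z : 'rV[C]_n) : C := \sum_j z 0 j * z 0 (rev_ord j).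

(* J conj(A) J, with J the reversal permutation matrix. *)
Definition rev_conj_mx (A : 'M[C]_n) : 'M[C]_n :=
  \matrix_(j, k) (A (rev_ord j) (rev_ord k))^*.

Lemma rev_form_conj (z : 'rV[C]_n) : rev_form (map_mx Num.conj z) = (rev_form z)^*.
Proof. by rewrite /rev_form rmorph_sum; apply: eq_bigr => j _; rewrite !mxE rmorphM. Qed.

Lemma rev_form_rev (z : 'rV[C]_n) : rev_form (\row_j z 0 (rev_ord j)) = rev_form z.
Proof.
rewrite /rev_form (reindex_inj rev_ord_inj) /=; apply: eq_bigr => j _.
by rewrite !mxE rev_ordK mulrC.
Qed.

Variable A : 'M[C]_n.
Hypothesis A_herm : forall j k, A k j = (A j k)^*.

Lemma trmxC_herm : A^t* = A.
Proof. by apply/matrixP => j k; rewrite !mxE -A_herm. Qed.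

Lemma sum_mul_rev_mxtrace :
  \sum_j \sum_k A j k * A (rev_ord j) (rev_ord k) = \tr (A *m rev_conj_mx A).
Proof.
apply: eq_bigr => j _; rewrite mxE; apply: eq_bigr => k _.
by rewrite !mxE -A_herm.
Qed.

Lemma trmxC_sub_rev_conj : (A - rev_conj_mx A)^t* = A - rev_conj_mx A.
Proof. by apply/matrixP => j k; rewrite !mxE rmorphB /= -!A_herm. Qed.

Lemma rev_form_eigen (v : 'rV[C]_n) (l : C) :
  v *m (A - rev_conj_mx A) = l *: v -> l * rev_form v = 0.
Proof.
move=> eig_v.
have -> : l * rev_form v =
    \sum_a \sum_b v 0 a * v 0 (rev_ord b) * (A a b - A (rev_ord b) (rev_ord a)).
  rewrite /rev_form mulr_sumr [RHS]exchange_big /=; apply: eq_bigr => b _.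
  rewrite mulrA; have /rowP/(_ b) := eig_v; rewrite !mxE => <-; rewrite mulr_suml.
  by apply: eq_bigr => a _; rewrite !mxE -A_herm mulrAC.
have swap : \sum_a \sum_b v 0 a * v 0 (rev_ord b) * A (rev_ord b) (rev_ord a) =
            \sum_a \sum_b v 0 a * v 0 (rev_ord b) * A a b.
  rewrite exchange_big (reindex_inj rev_ord_inj) /=; apply: eq_bigr => a _.
  rewrite (reindex_inj rev_ord_inj) /=; apply: eq_bigr => b _.
  by rewrite !rev_ordK [v 0 _ * _]mulrC.
under eq_bigr do under eq_bigr do rewrite mulrBr.
by under eq_bigr do rewrite sumrB; rewrite sumrB swap subrr.
Qed.

Definition sesq_form (z : 'rV[C]_n) : C :=
  \sum_j \sum_k (z 0 j)^* * A j k * z 0 k.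

Lemma conjugate_diag_sesq_form (P : 'M[C]_n) i :
  (P *m A *m P^t*) i i = sesq_form (map_mx Num.conj (row i P)).
Proof.
rewrite /sesq_form !mxE; under eq_bigr do rewrite !mxE mulr_suml.
rewrite exchange_big /=; apply: eq_bigr => j _; apply: eq_bigr => k _.
by rewrite !mxE conjCK.
Qed.

Lemma conjugate_rev_conj_diag (P : 'M[C]_n) i :
  (P *m rev_conj_mx A *m P^t*) i i = (sesq_form (\row_j row i P 0 (rev_ord j)))^*.
Proof.
rewrite /sesq_form !mxE rmorph_sum; under eq_bigr do rewrite !mxE mulr_suml.
rewrite exchange_big /= (reindex_inj rev_ord_inj) /=; apply: eq_bigr => j _.
rewrite rmorph_sum (reindex_inj rev_ord_inj) /=; apply: eq_bigr => k _.
by rewrite !mxE !rev_ordK !rmorphM /= conjCK.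
Qed.

Theorem mxtrace_mul_rev_conj_ge0 :
  (forall z, rev_form z = 0 -> 0 <= sesq_form z) -> 0 <= \tr (A *m rev_conj_mx A).
Proof.
move=> A_psd_isotropic.
have Hherm := trmxC_sub_rev_conj.
set H := A - rev_conj_mx A in Hherm; set P := spectralmx H; set d := spectral_diag H.
have Pu : P \is unitarymx := spectral_unitarymx H.
set X := P *m A *m P^t*; set Y := P *m rev_conj_mx A *m P^t*.
have Xherm : X^t* = X by rewrite !trmx_mul !map_mxM trmxCK trmxC_herm mulmxA.
have XYdiag : X - Y = diag_mx d by rewrite -mulmxBl -mulmxBr spectral_conj_herm.
rewrite -(mxtrace_unitary_conj P A _ Pu); apply: mxtrace_mul_ge0 Xherm XYdiag _.
move=> i dn0.
have Pi_isotropic : rev_form (row i P) = 0.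
  have /eqP := rev_form_eigen _ _ (row_spectral_eigen _ i Hherm).
  by rewrite mulf_eq0 (negbTE dn0) => /eqP.
apply: mulr_ge0.
  rewrite conjugate_diag_sesq_form; apply: A_psd_isotropic.
  by rewrite rev_form_conj Pi_isotropic conjC0.
rewrite conjugate_rev_conj_diag conjC_ge0; apply: A_psd_isotropic.
by rewrite rev_form_rev.
Qed.

End ReversalForm.

Lemma rev_form6 (C : numClosedFieldType) (z : 'rV[C]_6) :
  rev_form z = 2 * (z 0 0 * z 0 5 + z 0 1 * z 0 4 + z 0 2 * z 0 3).
Proof.
have [g zE] : exists g : nat -> C, forall k : 'I_6, z 0 k = g k.
  by exists (fun m => z 0 (inord m)) => k; rewrite inord_val.
rewrite /rev_form !big_ord_recl big_ord0 !zE.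
change (g 0%N * g 5%N + (g 1%N * g 4%N + (g 2%N * g 3%N + (g 3%N * g 2%N
         + (g 4%N * g 1%N + (g 5%N * g 0%N + 0))))) =
        2 * (g 0%N * g 5%N + g 1%N * g 4%N + g 2%N * g 3%N)).
ring.
Qed.

Theorem theorem5 (R : realType) (A : 'M[R[i]]_6) :
  is_hermitian6 A ->
  (forall z : 'rV[R[i]]_6,
      z 0 0 * z 0 5 + z 0 1 * z 0 4 + z 0 2 * z 0 3 = 0 ->
      0 <= herm_form A z) ->
  0 <= \sum_(j < 6) \sum_(k < 6) A j k * A (rev_ord j) (rev_ord k).
Proof.
move=> A_herm A_psd_isotropic.
rewrite (sum_mul_rev_mxtrace _ A_herm).
apply: mxtrace_mul_rev_conj_ge0 => // z; rewrite rev_form6 => /eqP.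
by rewrite mulf_eq0 pnatr_eq0 /= => /eqP; exact: A_psd_isotropic.
Qed.
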